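(* Let $A$ be an arborally satisfied set that is doubly congruent with a BST $T$. Then for any top tree $\tau$ of $T$, if the keys of $\tau$ are accessed (i.e. a point $(c,k)$ is added for each key $k$ of $\tau$) along a single column $c$, where $c$ is either the leftmost column of $A$, the rightmost column of $A$, the column immediately to the left of the leftmost column of $A$, or the column immediately to the right of the rightmost column of $A$, then the resulting set of points is arborally satisfied.
   Context: Point sets live in the grid plane, with the horizontal axis being time (columns) and the vertical axis being key (rows). A set $P$ of points is arborally satisfied if for every two points $x,y\in P$ not on a common horizontal or vertical line, the closed axis-parallel rectangle with corners $x$ and $y$ contains at least one point of $P$ other than $x,y$. A treap over pairs (key, priority) is a BST on keys that is a heap on priorities (higher priority nearer the root); ties in priority are grouped into multi-nodes, giving a multi-treap, in which each multi-node holds keys of equal priority and has children consistent with an underlying BST order (a multi-node may have up to one more child than its number of keys). For an arborally satisfied set $A$ whose rows are the keys of $T$, the left (right) priority of a row is the distance from the left (right) boundary of $A$ to the first point of $A$ in that row, smaller distance meaning higher priority. The left (right) multi-treap of $A$ is the multi-treap on these (row, priority) pairs. $T$ is left (right) congruent with $A$ if there is a choice of binary search tree structure inside each multi-node of the left (right) multi-treap of $A$ making the resulting tree equal to $T$; $T$ is doubly congruent with $A$ if it is both left and right congruent. A top tree of $T$ is a connected set of nodes containing the root. *)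

From mathcomp Require Import all_boot all_order all_algebra.
Set Implicit Arguments. Unset Strict Implicit. Unset Printing Implicit Defensive.
Import Order.TTheory GRing.Theory Num.Theory.
Local Open Scope ring_scope.

(* A point of the grid plane: (time/column, key/row). *)
Definition point := (int * int)%type.
Definition col (p : point) : int := p.1.
Definition row (p : point) : int := p.2.

Definition arborally_satisfied (P : seq point) : Prop :=
  forall x y, x \in P -> y \in P -> col x != col y -> row x != row y ->
    exists2 z, z \in P &
      [/\ z != x, z != y,
          Num.min (col x) (col y) <= col z <= Num.max (col x) (col y) &
          Num.min (row x) (row y) <= row z <= Num.max (row x) (row y)].

(* minimum / maximum of a (nonempty) list of integers (0 on the empty list) *)
Definition minl (s : seq int) : int := foldr Num.min (head 0 s) s.
Definition maxl (s : seq int) : int := foldr Num.max (head 0 s) s.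

Definition leftmost_col (A : seq point) : int := minl (map col A).
Definition rightmost_col (A : seq point) : int := maxl (map col A).
Definition rows (A : seq point) : seq int := map row A.
Definition row_cols (A : seq point) (r : int) : seq int :=
  [seq col p | p <- A & row p == r].

(* left (right) priority of row r, as a distance: smaller = higher priority *)
Definition left_dist (A : seq point) (r : int) : int :=
  minl (row_cols A r) - leftmost_col A.
Definition right_dist (A : seq point) (r : int) : int :=
  rightmost_col A - maxl (row_cols A r).

Inductive bst := Leaf | Node of bst & int & bst.

Fixpoint inorder (t : bst) : seq int :=
  match t with Leaf => [::] | Node l k r => inorder l ++ k :: inorder r end.

Definition root_seq (t : bst) : seq int :=
  match t with Leaf => [::] | Node _ k _ => [:: k] end.

Definition is_bst (t : bst) : bool := sorted <%R (inorder t).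

(* heap property w.r.t. a distance d (smaller distance = higher priority,
   higher priority nearer the root; ties allowed) *)
Fixpoint heap_dist (d : int -> int) (t : bst) : bool :=
  match t with
  | Leaf => true
  | Node l k r =>
      [&& all (fun x => d k <= d x) (root_seq l ++ root_seq r),
          heap_dist d l & heap_dist d r]
  end.

Definition is_treap_on (keys : seq int) (d : int -> int) (T : bst) : Prop :=
  [/\ inorder T =i keys, is_bst T & heap_dist d T].

Definition left_congruent (A : seq point) (T : bst) : Prop :=
  is_treap_on (rows A) (left_dist A) T.
Definition right_congruent (A : seq point) (T : bst) : Prop :=
  is_treap_on (rows A) (right_dist A) T.
Definition doubly_congruent (A : seq point) (T : bst) : Prop :=
  left_congruent A T /\ right_congruent A T.

(* t is obtained from T by pruning subtrees: its nodes form a connected set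
   containing the root of T (when t is not a leaf). *)
Fixpoint is_prefix (t T : bst) : bool :=
  match t, T with
  | Leaf, _ => true
  | Node l k r, Node L K R => [&& k == K, is_prefix l L & is_prefix r R]
  | _, _ => false
  end.

Definition is_leaf (t : bst) : bool := if t is Leaf then true else false.
Definition top_tree (tau T : bst) : bool := ~~ is_leaf tau && is_prefix tau T.

Definition access_column (A : seq point) (c : int) (tau : bst) : seq point :=
  A ++ [seq (c, k) | k <- inorder tau].

(** Let x = (c, k) be a new point, with k a key of the top tree tau, and y a
    point of A in another row and column.  If some key k' <> k of tau lies in
    the row range of the box spanned by x and y, then the new point (c, k')
    lies in the box.  Otherwise k and row y are separated by no key of tau;
    since tau is a top tree of the treap T, the key k is then an ancestor of
    row y in T, so its priority is at least that of row y.  When c lies at or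
    left of A, this says that the first point of row k lies no further right
    than the first point of row y, hence between columns c and col y, and it
    is a point of A in the box; symmetrically on the right. *)

From mathcomp Require Import all_boot all_order all_algebra zify.

Set Implicit Arguments.
Unset Strict Implicit.
Unset Printing Implicit Defensive.
Import Order.TTheory GRing.Theory Num.Theory.
Local Open Scope ring_scope.

Section TotalOrder.
Context {disp : Order.disp_t} {T : orderType disp}.
Implicit Types (a k r x : T) (s : seq T).

Lemma foldr_min_le a s x : x \in a :: s -> (foldr Order.min a s <= x)%O.
Proof.
elim: s x => [|b s IHs] x /=; first by rewrite inE => /eqP ->.
rewrite !inE ge_min => /or3P [/eqP ->|/eqP ->|xs]; first 2 [by rewrite lexx].
- by rewrite IHs ?mem_head ?orbT.
- by rewrite IHs ?inE ?xs ?orbT.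
Qed.

Lemma foldr_max_ge a s x : x \in a :: s -> (x <= foldr Order.max a s)%O.
Proof.
elim: s x => [|b s IHs] x /=; first by rewrite inE => /eqP ->.
rewrite !inE le_max => /or3P [/eqP ->|/eqP ->|xs]; first 2 [by rewrite lexx].
- by rewrite IHs ?mem_head ?orbT.
- by rewrite IHs ?inE ?xs ?orbT.
Qed.

Lemma foldr_min_mem a s : foldr Order.min a s \in a :: s.
Proof.
elim: s => [|b s IHs] /=; first exact: mem_head.
rewrite !inE; case: leP => _; rewrite ?eqxx ?orbT //.
by move: IHs; rewrite inE => /orP [->|->]; rewrite ?orbT.
Qed.

Lemma foldr_max_mem a s : foldr Order.max a s \in a :: s.
Proof.
elim: s => [|b s IHs] /=; first exact: mem_head.
rewrite !inE; case: leP => _; rewrite ?eqxx ?orbT //.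
by move: IHs; rewrite inE => /orP [->|->]; rewrite ?orbT.
Qed.

Lemma lt_outside_range k r x :
  (k < x)%O -> ~~ (Order.min k r <= x <= Order.max k r)%O -> (r < x)%O.
Proof. by move=> kx; rewrite ge_min (ltW kx) le_max /= negb_or -!ltNge => /andP []. Qed.

Lemma gt_outside_range k r x :
  (x < k)%O -> ~~ (Order.min k r <= x <= Order.max k r)%O -> (x < r)%O.
Proof. by move=> xk; rewrite le_max (ltW xk) andbT ge_min negb_or -!ltNge => /andP []. Qed.

End TotalOrder.

Lemma minl_le s x : x \in s -> minl s <= x.
Proof. by case: s => [//|b s] xs; apply: foldr_min_le; rewrite inE xs orbT. Qed.

Lemma maxl_ge s x : x \in s -> x <= maxl s.
Proof. by case: s => [//|b s] xs; apply: foldr_max_ge; rewrite inE xs orbT. Qed.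

Lemma minl_mem s : s != [::] -> minl s \in s.
Proof.
case: s => [//|b s] _; rewrite /minl; have := foldr_min_mem b (b :: s).
by rewrite inE => /predU1P [->|]; first exact: mem_head.
Qed.

Lemma maxl_mem s : s != [::] -> maxl s \in s.
Proof.
case: s => [//|b s] _; rewrite /maxl; have := foldr_max_mem b (b :: s).
by rewrite inE => /predU1P [->|]; first exact: mem_head.
Qed.

Lemma row_colsP A k x :
  reflect (exists2 p, p \in A & row p = k /\ col p = x) (x \in row_cols A k).
Proof.
apply: (iffP mapP) => [[p] | [p pA [<- <-]]].
  by rewrite mem_filter => /andP [/eqP pk pA] ->; exists p.
by exists p; rewrite // mem_filter eqxx.
Qed.

Lemma col_in_row_cols A p : p \in A -> col p \in row_cols A (row p).
Proof. by move=> pA; apply/row_colsP; exists p. Qed.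

Lemma row_cols_neq_nil A k : k \in rows A -> row_cols A k != [::].
Proof.
by case/mapP=> p pA ->; apply/eqP => empty; have := col_in_row_cols pA; rewrite empty.
Qed.

Lemma first_in_row A k : k \in rows A ->
  exists2 q, q \in A & row q = k /\ col q = minl (row_cols A k).
Proof. by move/row_cols_neq_nil/minl_mem/row_colsP. Qed.

Lemma last_in_row A k : k \in rows A ->
  exists2 q, q \in A & row q = k /\ col q = maxl (row_cols A k).
Proof. by move/row_cols_neq_nil/maxl_mem/row_colsP. Qed.

Lemma inorder_prefix t T : is_prefix t T -> {subset inorder t <= inorder T}.
Proof.
elim: T t => [|L IHL K R IHR] [|l k r] //= /and3P [/eqP -> pl pr] x.
by rewrite !mem_cat !inE => /or3P [/IHL->|->|/IHR->]; rewrite ?orbT.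
Qed.

Lemma heap_dist_root d t :
  heap_dist d t -> {in root_seq t & inorder t, forall k x, d k <= d x}.
Proof.
elim: t => [//|l IHl k r IHr] /= /and3P [top hl hr] ? x /[1!inE] /eqP ->.
rewrite mem_cat inE => /or3P [xl|/eqP ->//|xr].
- case: l IHl top hl xl => [//|ll kl lr] IHl /= /andP [dkl _] hl xl.
  exact: le_trans dkl (IHl hl kl x (mem_head _ _) xl).
- case: r IHr top hr xr => [//|rl kr rr] IHr /=.
  rewrite all_cat /= => /and3P [_ dkr _] hr xr.
  exact: le_trans dkr (IHr hr kr x (mem_head _ _) xr).
Qed.

Lemma is_bst_Node l k r : is_bst (Node l k r) ->
  [/\ is_bst l, is_bst r, {in inorder l, forall x, x < k} & {in inorder r, forall x, k < x}].
Proof.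
rewrite /is_bst /= !(sorted_pairwise lt_trans) pairwise_cat pairwise_cons.
case/and3P => /allrelP lk sl /andP [/allP kr sr]; split=> // x xl.
by apply: lk; rewrite ?mem_head.
Qed.

Lemma treap_prefix_dist_le d T tau k r :
  is_bst T -> heap_dist d T -> is_prefix tau T ->
  k \in inorder tau -> r \in inorder T ->
  ~~ has (fun k' => (k' != k) && (Num.min k r <= k' <= Num.max k r)) (inorder tau) ->
  d k <= d r.
Proof.
elim: T tau => [|L IHL K R IHR] [|l K' r'] //= bstT hT /and3P [/eqP -> pl pr].
have [bL bR ltK gtK] := is_bst_Node bstT.
have /and3P [_ hL hR] := hT.
rewrite has_cat /= mem_cat inE => kt rT /norP [nl /norP [nK nr]].
have [->|kK] := eqVneq k K.
  exact: (@heap_dist_root d (Node L K R) hT) _ _ (mem_head _ _) rT.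
move: nK; rewrite eq_sym kK /= => nK.
move: rT; rewrite mem_cat inE.
case/or3P: kt => [kl|/eqP kK'|kr]; last 2 [by rewrite kK' eqxx in kK].
- have rK := lt_outside_range (ltK _ (inorder_prefix pl kl)) nK.
  case/or3P=> [rL|/eqP rK'|/gtK Kr]; first exact: IHL l bL hL pl kl rL nl.
  + by rewrite rK' ltxx in rK.
  + by have := lt_trans rK Kr; rewrite ltxx.
- have Kr := gt_outside_range (gtK _ (inorder_prefix pr kr)) nK.
  case/or3P=> [/ltK rK|/eqP rK'|rR]; last exact: IHR r' bR hR pr kr rR nr.
  + by have := lt_trans rK Kr; rewrite ltxx.
  + by rewrite rK' ltxx in Kr.
Qed.

Lemma first_in_row_between A c k y :
  c <= leftmost_col A -> y \in A -> k \in rows A ->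
  left_dist A k <= left_dist A (row y) ->
  exists2 q, q \in A & row q = k /\ Num.min c (col y) <= col q <= Num.max c (col y).
Proof.
move=> cL yA kA dle; have [q qA [qk qfirst]] := first_in_row kA.
exists q => //; split=> //.
have Lq : leftmost_col A <= col q by apply/minl_le/map_f.
have yfirst := minl_le (col_in_row_cols yA).
by move: dle; rewrite /left_dist -qfirst; lia.
Qed.

Lemma last_in_row_between A c k y :
  rightmost_col A <= c -> y \in A -> k \in rows A ->
  right_dist A k <= right_dist A (row y) ->
  exists2 q, q \in A & row q = k /\ Num.min c (col y) <= col q <= Num.max c (col y).
Proof.
move=> Rc yA kA dle; have [q qA [qk qlast]] := last_in_row kA.
exists q => //; split=> //.
have qR : col q <= rightmost_col A by apply/maxl_ge/map_f.
have ylast := maxl_ge (col_in_row_cols yA).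
by move: dle; rewrite /right_dist -qlast; lia.
Qed.

Definition box_witness (P : seq point) (x y : point) : Prop :=
  exists2 z, z \in P &
    [/\ z != x, z != y,
        Num.min (col x) (col y) <= col z <= Num.max (col x) (col y) &
        Num.min (row x) (row y) <= row z <= Num.max (row x) (row y)].

Lemma box_witnessC P x y : box_witness P x y -> box_witness P y x.
Proof. by case=> z zP [zx zy zc zr]; exists z => //; split; rewrite // minC maxC. Qed.

Lemma box_witness_sub P Q x y :
  {subset P <= Q} -> box_witness P x y -> box_witness Q x y.
Proof. by move=> PQ [z /PQ zQ box]; exists z. Qed.

Lemma access_column_sub A c tau : {subset A <= access_column A c tau}.
Proof. by move=> p pA; rewrite mem_cat pA. Qed.

Lemma access_box_witness A T tau c k y d :
  arborally_satisfied A -> is_treap_on (rows A) d T -> is_prefix tau T ->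
  k \in inorder tau -> y \in A -> c != col y -> k != row y ->
  (d k <= d (row y) ->
     exists2 q, q \in A & row q = k /\ Num.min c (col y) <= col q <= Num.max c (col y)) ->
  box_witness (access_column A c tau) (c, k) y.
Proof.
move=> satA [rowsT bstT heapT] tauT kt yA cy ky extreme.
have [xA|xA] := boolP ((c, k) \in A).
  exact: box_witness_sub (access_column_sub c tau) (satA _ _ xA yA cy ky).
have [/hasP [k' k't /andP [k'k k'box]]|nobox] :=
  boolP (has (fun k' => (k' != k) && (Num.min k (row y) <= k' <= Num.max k (row y)))
             (inorder tau)).
  exists (c, k'); first by rewrite mem_cat map_f ?orbT.
  split=> //=; last by rewrite ge_min le_max lexx.
  - by apply: contra_neq k'k; case.
  - by apply: contra_neq cy => <-.
have yT : row y \in inorder T by rewrite rowsT map_f.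
have [q qA [qk qbox]] := extreme (treap_prefix_dist_le bstT heapT tauT kt yT nobox).
exists q; first exact: access_column_sub.
split=> //=; last by rewrite qk ge_min le_max lexx.
- by apply: contraNneq xA => <-.
- by apply: contra_neq ky => qy; rewrite -qk qy.
Qed.

Unset Implicit Arguments.

Theorem mainTheorem5 (A : seq point) (T tau : bst) (c : int) :
  arborally_satisfied A ->
  doubly_congruent A T ->
  top_tree tau T ->
  c \in [:: leftmost_col A; rightmost_col A;
           leftmost_col A - 1; rightmost_col A + 1] ->
  arborally_satisfied (access_column A c tau).
Proof.
move=> satA [leftT rightT] /andP [_ tauT] cA.
have kA k : k \in inorder tau -> k \in rows A.
  by case: leftT => rowsT _ _ /(inorder_prefix tauT); rewrite rowsT.
have cout : (c <= leftmost_col A) || (rightmost_col A <= c).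
  by move: cA; rewrite !inE => /or4P [] /eqP ->; lia.
have new_old k y : k \in inorder tau -> y \in A -> c != col y -> k != row y ->
    box_witness (access_column A c tau) (c, k) y.
  move=> kt yA cy ky; case/orP: cout => [cL|Rc].
  - exact: access_box_witness satA leftT tauT kt yA cy ky
             (first_in_row_between cL yA (kA k kt)).
  - exact: access_box_witness satA rightT tauT kt yA cy ky
             (last_in_row_between Rc yA (kA k kt)).
move=> x y; rewrite !mem_cat.
move=> /orP [xA|/mapP [k kt ->]] /orP [yA|/mapP [k' k't ->]] /= cxy rxy.
- exact: box_witness_sub (access_column_sub c tau) (satA x y xA yA cxy rxy).
- by apply/box_witnessC/new_old; rewrite // eq_sym.
- exact: new_old.
- by rewrite eqxx in cxy.
Qed.
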